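(* In the simplified model with conditional inclusion lists, regardless of the payment rule, if $$B_1> f_{BP}+ r\cdot s\cdot\max\{c_{block}-w+1,\ 0\},$$ then censoring $t_0$ (omitting it from the block, while keeping the block approved) is a dominant strategy for the block producer; consequently there is no Nash equilibrium in which $t_0$ is included in the block.
   Context: Simplified model (single slot, complete information, Nash equilibrium). Players: a block producer and $m$ includers with distinct orders $1,\dots,m$. A mempool $M$ of $w$ user transactions, each of size $s>0$; $t_0\in M$ is a target transaction. Each inclusion list holds at most $c_{Incl}$ transactions and the block at most $c_{block}$. Each includer chooses an inclusion list consisting of transactions from $M$ and/or fake transactions it creates; then the block producer, seeing all lists, chooses a block consisting of transactions from $M$ and/or fake transactions it creates. No party may add transactions to the mempool. Every transaction in an approved block pays burning fee $r\cdot s$ ($r\ge0$); for fake transactions this is paid by their creator. Processing costs are zero. Conditional inclusion lists: the attesters reject the block iff some transaction appearing in an inclusion list is missing from the block while the block contains fewer than $c_{block}$ transactions. Unconditional inclusion lists: the block is rejected iff some transaction in an inclusion list is missing from the block. If the block is rejected, the block producer and includers receive no fees. Payments: if $t_0$ is in an approved block, the block producer receives $f_{BP}\ge0$ from $t_0$ (whether or not $t_0$ is in a list); the includers collectively receive at most $f_{CM}\ge0$ from $t_0$, and only if $t_0$ is in some inclusion list and in the approved block. $sum$ denotes the block producer's total block rewards (sum of its fees from its block). An external briber pays the block producer $B_1$ if $t_0$ is not in its block, and pays includer $j$ the amount $B^j$ if $t_0$ is not in its inclusion list. Each player's utility is fees received plus bribes received minus burning fees paid for its own fake transactions in an approved block.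 *)

From HB Require Import structures.
From mathcomp Require Import all_boot all_order all_algebra.
Set Implicit Arguments. Unset Strict Implicit. Unset Printing Implicit Defensive.
Import Order.TTheory GRing.Theory Num.Theory.
Local Open Scope ring_scope.

(* Transactions: the mempool M consists of the w distinct user transactions
   [inl i], i : 'I_w.  Fake transactions are [inr (c, k)] where the creator
   c is [None] for the block producer and [Some j] for includer j, and
   k : nat is an arbitrary index (parties may create as many fakes as they
   like).  All transactions have the same size s. *)
Definition tx (w m : nat) := ('I_w + (option 'I_m * nat))%type.

Section Game.
Variables (w m : nat).

Definition is_mempool (t : tx w m) : bool := if t is inl _ then true else false.
Definition fake_of_BP (t : tx w m) : bool :=
  if t is inr (None, _) then true else false.
Definition fake_of (j : 'I_m) (t : tx w m) : bool :=
  if t is inr (Some j', _) then j' == j else false.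

Definition profile := 'I_m -> seq (tx w m).

Definition valid_list (cI : nat) (j : 'I_m) (l : seq (tx w m)) : bool :=
  [&& uniq l, (size l <= cI)%N & all (fun t => is_mempool t || fake_of j t) l].

Definition valid_profile (cI : nat) (L : profile) : Prop :=
  forall j, valid_list cI j (L j).

Definition valid_block (cB : nat) (b : seq (tx w m)) : bool :=
  [&& uniq b, (size b <= cB)%N & all (fun t => is_mempool t || fake_of_BP t) b].

Definition approved_cond (cB : nat) (L : profile) (b : seq (tx w m)) : bool :=
  (cB <= size b)%N || [forall j, all (fun t => t \in b) (L j)].

Variable R : realFieldType.

(* Block producer's utility.  pBP i L = fee the block producer receives from
   mempool transaction i (when it is in an approved block) under the payment
   rule, given the inclusion lists L. *)
Definition u_BP (cB : nat) (t0 : 'I_w) (r s B1 : R)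
    (pBP : 'I_w -> profile -> R) (L : profile) (b : seq (tx w m)) : R :=
  (if approved_cond cB L b
   then (\sum_(i < w | inl i \in b) pBP i L) - r * s * (count fake_of_BP b)%:R
   else 0)
  + (if (inl t0 : tx w m) \in b then 0 else B1).

(* Includer j's utility.  pI j i L = fee includer j receives from mempool
   transaction i (when it is in an approved block). *)
Definition u_I (cB : nat) (t0 : 'I_w) (r s : R) (Bj : 'I_m -> R)
    (pI : 'I_m -> 'I_w -> profile -> R) (j : 'I_m)
    (L : profile) (b : seq (tx w m)) : R :=
  (if approved_cond cB L b
   then (\sum_(i < w | inl i \in b) pI j i L) - r * s * (count (fake_of j) b)%:R
   else 0)
  + (if (inl t0 : tx w m) \in L j then 0 else Bj j).

Definition upd (L : profile) (j : 'I_m) (l : seq (tx w m)) : profile :=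
  fun k => if k == j then l else L k.

(* Nash equilibrium: includers choose lists L, the block producer (who moves
   after seeing the lists) chooses a strategy beta : profile -> block. *)
Definition is_NE (cI cB : nat) (t0 : 'I_w) (r s B1 : R) (Bj : 'I_m -> R)
    (pBP : 'I_w -> profile -> R) (pI : 'I_m -> 'I_w -> profile -> R)
    (L : profile) (beta : profile -> seq (tx w m)) : Prop :=
  [/\ valid_profile cI L,
      (forall L', valid_profile cI L' -> valid_block cB (beta L')),
      (forall b, valid_block cB b ->
         u_BP cB t0 r s B1 pBP L b <= u_BP cB t0 r s B1 pBP L (beta L)) &
      (forall j l, valid_list cI j l ->
         u_I cB t0 r s Bj pI j (upd L j l) (beta (upd L j l))
         <= u_I cB t0 r s Bj pI j L (beta L))].

End Game.

From HB Require Import structures.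
From mathcomp Require Import all_boot all_order all_algebra.
From mathcomp Require Import zify lra.

(* Whatever the inclusion lists are, the block producer can fill its block to
   capacity with the min(c_block, w-1) most profitable mempool transactions
   other than t0, padded with its own fake transactions; a full block is always
   approved under conditional inclusion lists.  This block earns the bribe B1,
   collects at least the fees of any block containing t0 except f_BP, and burns
   fees for at most max(c_block - w + 1, 0) fakes. *)

Set Implicit Arguments.
Unset Strict Implicit.
Unset Printing Implicit Defensive.
Import Order.TTheory GRing.Theory Num.Theory.
Local Open Scope ring_scope.

Lemma exists_card_subset_between (T : finType) (A D : {set T}) n :
  A \subset D -> (#|A| + n <= #|D|)%N ->
  exists B : {set T}, [/\ A \subset B, B \subset D & #|B| = (#|A| + n)%N].
Proof.
elim: n A => [|n IHn] A AD le_D; first by exists A; rewrite addn0.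
have /properP[_ [x xD xA]] : A \proper D by rewrite properEcard AD; lia.
have xAD : x |: A \subset D by rewrite subUset sub1set xD AD.
have [|B [xAB BD cardB]] := IHn (x |: A) xAD; first by rewrite cardsU1 xA; lia.
exists B; split=> //; last by rewrite cardB cardsU1 xA; lia.
exact: subset_trans (subsetUr _ _) xAB.
Qed.

Lemma sumr_subset_le (T : finType) (R : numDomainType) (F : T -> R) (A B : {set T}) :
  (forall x, 0 <= F x) -> A \subset B -> \sum_(x in A) F x <= \sum_(x in B) F x.
Proof.
move=> F_ge0 AB; rewrite [leRHS](big_setID A) /= (setIidPr AB) lerDl.
exact: sumr_ge0.
Qed.

Lemma exists_max_sum_card_subset (T : finType) (R : realDomainType) (F : T -> R)
    (D : {set T}) k :
  (forall x, 0 <= F x) -> (k <= #|D|)%N ->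
  exists2 M : {set T}, M \subset D /\ #|M| = k &
    forall A : {set T}, A \subset D -> (#|A| <= k)%N -> \sum_(x in A) F x <= \sum_(x in M) F x.
Proof.
move=> F_ge0 kD.
have [|M0 [_ M0D M0k]] := exists_card_subset_between (n := k) (sub0set D); first by rewrite cards0.
pose P (B : {set T}) := (B \subset D) && (#|B| == k).
have PM0 : P M0 by rewrite /P M0D M0k cards0 add0n eqxx.
case: (arg_maxP (fun B : {set T} => \sum_(x in B) F x) PM0) => M /andP[MD /eqP Mk] Mmax.
exists M => // A AD Ak.
have [|A' [AA' A'D A'k]] := exists_card_subset_between (n := k - #|A|) AD; first lia.
apply: le_trans (sumr_subset_le F_ge0 AA') _; apply: Mmax.
by rewrite /P A'D A'k subnKC ?eqxx.
Qed.

Section PaddedBlock.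
Variables w m : nat.
Implicit Types (A : {set 'I_w}) (b : seq (tx w m)).

Definition bp_fakes n : seq (tx w m) := [seq inr (None, k) | k <- iota 0 n].

Definition padded_block A n : seq (tx w m) := [seq inl i | i <- enum A] ++ bp_fakes n.

Lemma mem_inl_padded_block A n i : ((inl i : tx w m) \in padded_block A n) = (i \in A).
Proof.
rewrite mem_cat (mem_map inl_inj) mem_enum.
suff /negbTE-> : (inl i : tx w m) \notin bp_fakes n by rewrite orbF.
by apply/mapP => -[].
Qed.

Lemma size_padded_block A n : size (padded_block A n) = (#|A| + n)%N.
Proof. by rewrite size_cat !size_map size_iota cardE. Qed.

Lemma count_fake_padded_block A n : count (@fake_of_BP w m) (padded_block A n) = n.
Proof.
rewrite count_cat !count_map (@eq_count _ _ pred0) ?count_pred0 //.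
by rewrite (@eq_count _ _ predT) ?count_predT ?size_iota.
Qed.

Lemma valid_padded_block cB A n :
  (#|A| + n <= cB)%N -> valid_block cB (padded_block A n).
Proof.
move=> le_cB; apply/and3P; split.
- rewrite cat_uniq (map_inj_uniq inl_inj) enum_uniq map_inj_uniq ?iota_uniq.
    by rewrite andbT; apply/hasPn => t /mapP[k _ ->]; apply/mapP => -[].
  by move=> k k' [].
- by rewrite size_padded_block.
- by rewrite all_cat; apply/andP; split; apply/allP => t /mapP[x _ ->].
Qed.

Definition mempool_set b : {set 'I_w} := [set i | inl i \in b].

Lemma card_mempool_set_le_size b : uniq b -> (#|mempool_set b| <= size b)%N.
Proof.
move=> b_uniq; rewrite cardE -(size_map (@inl _ (option 'I_m * nat))).
apply: uniq_leq_size.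
- by rewrite map_inj_uniq ?enum_uniq //; exact: inl_inj.
- by move=> t /mapP[i]; rewrite mem_enum inE => ib ->.
Qed.

End PaddedBlock.

Lemma subn_minn_pred_le_max (R : realDomainType) (c n : nat) : (0 < n)%N ->
  (c - minn c n.-1)%:R <= Num.max (c%:R - n%:R + 1) 0 :> R.
Proof.
move=> n_gt0; rewrite le_max; case: (leqP c n.-1) => [c_le|n_lt].
  by rewrite subnn lexx orbT.
have -> : (c - n.-1 = c + 1 - n)%N by lia.
rewrite natrB; last by lia.
by rewrite natrD addrAC lexx.
Qed.

Section Censoring.
Variables (R : realFieldType) (w m cB : nat) (t0 : 'I_w) (r s fBP B1 : R).
Variable pBP : 'I_w -> profile w m -> R.
Hypotheses (rs_ge0 : 0 <= r * s) (pBP_t0 : forall L, pBP t0 L = fBP)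
  (pBP_ge0 : forall i L, 0 <= pBP i L).

Lemma u_BP_including_le L b :
  (inl t0 : tx w m) \in b ->
  u_BP cB t0 r s B1 pBP L b <= fBP + \sum_(i in mempool_set b :\ t0) pBP i L.
Proof.
move=> t0b; rewrite /u_BP t0b addr0.
have -> : \sum_(i < w | inl i \in b) pBP i L = \sum_(i in mempool_set b) pBP i L.
  by apply: eq_bigl => i; rewrite inE.
rewrite (big_setD1 t0) ?inE // pBP_t0.
have sum_ge0 : 0 <= \sum_(i in mempool_set b :\ t0) pBP i L by exact: sumr_ge0.
case: approved_cond; last by rewrite addr_ge0 // -(pBP_t0 L).
by rewrite gerBl mulr_ge0.
Qed.

Lemma u_BP_padded_block L (A : {set 'I_w}) n :
  (#|A| + n)%N = cB -> t0 \notin A ->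
  u_BP cB t0 r s B1 pBP L (padded_block m A n) = \sum_(i in A) pBP i L - r * s * n%:R + B1.
Proof.
move=> card_cB t0A.
rewrite /u_BP /approved_cond size_padded_block card_cB leqnn mem_inl_padded_block.
rewrite (negbTE t0A) count_fake_padded_block.
by congr (_ - _ + _); apply: eq_bigl => i; rewrite mem_inl_padded_block.
Qed.

Lemma censoring_dominates_including (L : profile w m) :
  fBP + r * s * Num.max (cB%:R - w%:R + 1) 0 < B1 ->
  exists b' : seq (tx w m),
    [/\ valid_block cB b', (inl t0 : tx w m) \notin b', approved_cond cB L b' &
        forall b, valid_block cB b -> (inl t0 : tx w m) \in b ->
          u_BP cB t0 r s B1 pBP L b < u_BP cB t0 r s B1 pBP L b'].
Proof.
move=> B1_gt.
pose D : {set 'I_w} := ~: [set t0].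
have card_D : #|D| = w.-1 by rewrite cardsC1 card_ord.
pose k := minn cB w.-1.
have [|M [MD card_M] M_max] := @exists_max_sum_card_subset _ _ (pBP^~ L) D k (pBP_ge0^~ L).
  by rewrite card_D geq_minr.
have t0M : t0 \notin M by apply/negP => /(subsetP MD); rewrite !inE eqxx.
have card_b' : (#|M| + (cB - k))%N = cB by rewrite card_M subnKC // geq_minl.
exists (padded_block m M (cB - k)); split.
- by rewrite valid_padded_block ?card_b'.
- by rewrite mem_inl_padded_block.
- by rewrite /approved_cond size_padded_block card_b' leqnn.
move=> b /and3P[b_uniq b_size _] t0b; rewrite u_BP_padded_block //.
apply: le_lt_trans (u_BP_including_le L t0b) _.
have card_others : (#|mempool_set b :\ t0| <= k)%N.
  have others_D : mempool_set b :\ t0 \subset D.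
    by apply/subsetP => i; rewrite !inE => /andP[].
  rewrite leq_min -card_D subset_leq_card // andbT.
  apply: leq_trans (subset_leq_card (subsetDl _ _)) _.
  exact: leq_trans (card_mempool_set_le_size b_uniq) b_size.
have others_le : \sum_(i in mempool_set b :\ t0) pBP i L <= \sum_(i in M) pBP i L.
  by apply: M_max => //; apply/subsetP => i; rewrite !inE => /andP[].
have padding_le : r * s * (cB - k)%:R <= r * s * Num.max (cB%:R - w%:R + 1) 0.
  by rewrite ler_wpM2l // subn_minn_pred_le_max // (leq_trans _ (ltn_ord t0)).
lra.
Qed.

End Censoring.

Theorem mainTheorem6 (R : realFieldType) (w m cI cB : nat) (t0 : 'I_w)
    (s r fBP fCM B1 : R) (Bj : 'I_m -> R)
    (pBP : 'I_w -> profile w m -> R) (pI : 'I_m -> 'I_w -> profile w m -> R) :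
  0 < s -> 0 <= r -> 0 <= fBP -> 0 <= fCM ->
  (forall L, pBP t0 L = fBP) ->
  (forall i L, 0 <= pBP i L) ->
  (forall j L, 0 <= pI j t0 L) ->
  (forall L, \sum_(j < m) pI j t0 L <= fCM) ->
  (forall L, (forall j, (inl t0 : tx w m) \notin L j) -> forall j, pI j t0 L = 0) ->
  fBP + r * s * Num.max (cB%:R - w%:R + 1) 0 < B1 ->
  (forall L : profile w m, valid_profile cI L ->
     exists b' : seq (tx w m),
       [/\ valid_block cB b', (inl t0 : tx w m) \notin b', approved_cond cB L b' &
           forall b, valid_block cB b -> (inl t0 : tx w m) \in b ->
             u_BP cB t0 r s B1 pBP L b < u_BP cB t0 r s B1 pBP L b'])
  /\
  (forall (L : profile w m) (beta : profile w m -> seq (tx w m)),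
     is_NE cI cB t0 r s B1 Bj pBP pI L beta -> (inl t0 : tx w m) \notin beta L).
Proof.
move=> s_gt0 r_ge0 _ _ pBP_t0 pBP_ge0 _ _ _ B1_gt.
have rs_ge0 : 0 <= r * s by rewrite mulr_ge0 // ltW.
have dominates L := censoring_dominates_including rs_ge0 pBP_t0 pBP_ge0 L B1_gt.
split=> [L _|L beta [L_valid beta_valid beta_best _]]; first exact: dominates.
apply/negP => t0_in.
have [b' [b'_valid _ _ b'_better]] := dominates L.
have := beta_best b' b'_valid.
by rewrite leNgt b'_better ?beta_valid.
Qed.
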